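(* Let $(V,o)$ be a normal surface singularity of degree one (i.e. $Z^2=-1$) with $p_f(V,o)>0$, where $Z$ is the fundamental cycle on the minimal resolution. Assume that $Z$ is essentially irreducible. Then $$p_a(V,o)=\frac{p(p-1)m}{2}+1,$$ where $p=p_f(V,o)$ and $m$ is the length of the Yau sequence for $Z$.
   Context: Let $\pi\colon X\to V$ be the minimal resolution and $\pi^{-1}(o)=\bigcup_{i=1}^n E_i$ the irreducible components of the exceptional set. A cycle is $D=\sum d_iE_i$, $d_i\in\mathbb Z$; $D_1\le D_2$ means coefficientwise inequality, $D_1<D_2$ means $D_1\le D_2$, $D_1\neq D_2$. $K$ is the canonical divisor of $X$; for a cycle $D>0$, $p_a(D)=1+\frac12(D^2+D\cdot K)$. The fundamental cycle $Z$ is the smallest cycle $D>0$ with support $\pi^{-1}(o)$ with $D\cdot E_i\le0$ for all $i$; $p_f(V,o)=p_a(Z)$; the degree is $-Z^2$. The arithmetic genus is $p_a(V,o)=\max\{p_a(D)\mid D>0\text{ a cycle}\}$. ''$\mathcal O_D(-C)$ numerically trivial'' means $C\cdot E=0$ for every irreducible component $E\le D$. $Z_{min}$ is the unique minimal cycle $0<Z_{min}\le Z$ with $p_a(Z_{min})=p_a(Z)$. Yau sequence: for a cycle $D$ that is the fundamental cycle on its support with $Z_{min}\le D$, $p_a(D)=p_f(V,o)$ and $D\cdot E=0$ for all components $E\le Z_{min}$, the Tyurina component of $D$ is the unique maximal cycle $0<D'<D$ with $\mathcal O_{D'}(-D)$ numerically trivial and $p_a(D')=p_a(D)$. Set $D_1=Z$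 and $D_{i+1}=$ Tyurina component of $D_i$ as long as $D_i\cdot E=0$ for all components $E\le Z_{min}$, stopping at the first $D_m$ with $D_m\cdot Z_{min}<0$; $m$ is the length of the Yau sequence. A $(-2)$-curve is a smooth rational exceptional curve $E$ with $E^2=-2$. $Z$ is essentially irreducible if there is a component $A\le Z$ which is not a $(-2)$-curve such that, with $k$ the coefficient of $A$ in $Z$, either $Z=kA$ or all components of $Z-kA$ are $(-2)$-curves. *)

(* Numerical (intersection-lattice) model of the exceptional
   set of the minimal resolution of a normal surface singularity. *)
From HB Require Import structures.
From mathcomp Require Import all_boot all_order all_algebra.
Set Implicit Arguments. Unset Strict Implicit. Unset Printing Implicit Defensive.
Import Order.TTheory GRing.Theory Num.Theory.
Local Open Scope ring_scope.

(* Data: n components E_0..E_{n-1}; M i j = E_i . E_j ; g i = p_a(E_i). *)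

(* A cycle D = sum_i d_i E_i. *)
Definition ecycle (n : nat) := 'I_n -> int.

Definition Ecyc (n : nat) (j : 'I_n) : ecycle n := fun i => (i == j)%:Z.

Definition inter (n : nat) (M : 'M[int]_n) (D1 D2 : ecycle n) : int :=
  \sum_(i < n) \sum_(j < n) D1 i * M i j * D2 j.

(* K . E_i, by adjunction: 2 p_a(E_i) - 2 = E_i^2 + K.E_i. *)
Definition KE (n : nat) (M : 'M[int]_n) (g : 'I_n -> nat) (i : 'I_n) : int :=
  2 * (g i)%:Z - 2 - M i i.

Definition interK (n : nat) (M : 'M[int]_n) (g : 'I_n -> nat) (D : ecycle n) : int :=
  \sum_(i < n) D i * KE M g i.

(* p_a(D) = 1 + (D^2 + D.K)/2 ; D^2 + D.K is always even, so the division
   is exact. *)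
Definition pa (n : nat) (M : 'M[int]_n) (g : 'I_n -> nat) (D : ecycle n) : int :=
  1 + ((inter M D D + interK M g D) %/ 2)%Z.

Definition cle (n : nat) (D1 D2 : ecycle n) : Prop := forall i, D1 i <= D2 i.
Definition clt (n : nat) (D1 D2 : ecycle n) : Prop :=
  cle D1 D2 /\ exists i, D1 i != D2 i.

Definition czero (n : nat) : ecycle n := fun _ => 0.
Arguments czero n : clear implicits.

Definition in_supp (n : nat) (D : ecycle n) (i : 'I_n) : Prop := D i != 0.

Definition resolution_data (n : nat) (M : 'M[int]_n) (g : 'I_n -> nat) : Prop :=
  (0 < n)%N /\
  [/\ (forall i j, M i j = M j i),
      (forall i j, i != j -> 0 <= M i j),
      (forall D : ecycle n, (exists i, D i != 0) -> inter M D D < 0),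
      (* connected exceptional set *)
      (forall S : {set 'I_n}, S != set0 -> S != setT ->
         exists i j, [/\ i \in S, j \notin S & 0 < M i j]) &
      (* minimality: no smooth rational (-1)-curve *)
      (forall i, ~ (M i i = -1 /\ g i = 0%N))].

Definition is_fundamental_cycle (n : nat) (M : 'M[int]_n) (Z : ecycle n) : Prop :=
  let adm := fun D : ecycle n =>
    clt (czero n) D /\ (forall i, D i != 0) /\ (forall i, inter M D (Ecyc i) <= 0) in
  adm Z /\ (forall D, adm D -> cle Z D).

Definition is_arith_genus (n : nat) (M : 'M[int]_n) (g : 'I_n -> nat) (P : int) : Prop :=
  (exists D : ecycle n, clt (czero n) D /\ pa M g D = P) /\
  (forall D : ecycle n, clt (czero n) D -> pa M g D <= P).

Definition is_Zmin (n : nat) (M : 'M[int]_n) (g : 'I_n -> nat) (Z Y : ecycle n) : Prop :=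
  let P := fun Y : ecycle n => [/\ clt (czero n) Y, cle Y Z & pa M g Y = pa M g Z] in
  P Y /\ (forall Y', P Y' -> cle Y Y').

(* D' is the Tyurina component of D: the unique maximal cycle 0 < D' < D
   with O_{D'}(-D) numerically trivial and p_a(D') = p_a(D). *)
Definition is_tyurina_component (n : nat) (M : 'M[int]_n) (g : 'I_n -> nat)
    (D D' : ecycle n) : Prop :=
  let P := fun C : ecycle n =>
    [/\ clt (czero n) C, clt C D,
        (forall i, in_supp C i -> inter M D (Ecyc i) = 0) &
        pa M g C = pa M g D] in
  P D' /\ (forall C, P C -> cle C D').

Definition is_yau_sequence (n : nat) (M : 'M[int]_n) (g : 'I_n -> nat)
    (Z Zmin : ecycle n) (Ds : nat -> ecycle n) (m : nat) : Prop :=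
  [/\ (1 <= m)%N, Ds 1%N = Z,
      (forall k, (1 <= k < m)%N ->
         (forall i, in_supp Zmin i -> inter M (Ds k) (Ecyc i) = 0) /\
         is_tyurina_component M g (Ds k) (Ds k.+1)) &
      inter M (Ds m) Zmin < 0].

Definition minus2_curve (n : nat) (M : 'M[int]_n) (g : 'I_n -> nat) (i : 'I_n) : Prop :=
  g i = 0%N /\ M i i = -2.

Definition essentially_irreducible (n : nat) (M : 'M[int]_n) (g : 'I_n -> nat)
    (Z : ecycle n) : Prop :=
  exists a : 'I_n, [/\ in_supp Z a, ~ minus2_curve M g a &
    forall i, i != a -> in_supp Z i -> minus2_curve M g i].

From mathcomp Require Import all_boot all_order all_algebra.
From mathcomp Require Import zify ring lra.
From Stdlib Require Import FunctionalExtensionality.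
Import Order.TTheory GRing.Theory Num.Theory.
Local Open Scope ring_scope.
Set Implicit Arguments. Unset Strict Implicit. Unset Printing Implicit Defensive.

(* Every component other than A is a (-2)-curve, so K.D = D_A (K.E_A) and
   p_a(D) only depends on D^2 and D_A.  Each term D_j of the Yau sequence has
   D_j^2 = -1 and a unique component E_f with D_j.E_f = -1, D_j being
   orthogonal to its other components; its Tyurina component is D_j - E_f, and
   the terms are mutually orthogonal.  Minimality of Z_min forces the last
   such E_f to be A, so P = D_1 + ... + D_m satisfies P.D = -D_A for every
   cycle D.  Bessel's inequality for the family (D_j) in the negative definite
   lattice gives Z_A = 1, hence K.E_A = 2p - 1, and with c_j = D.D_j
     D^2 + K.D <= sum_j (-c_j^2 - (2p - 1) c_j) <= m p (p - 1),
   with equality for D = pP. *)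

Lemma dvdz2_mul_pred (x : int) : (2 %| x * (x - 1))%Z.
Proof.
have [q [->|->]] : exists q, x = 2 * q \/ x = 2 * q + 1 by exists (x %/ 2)%Z; lia.
all: nia.
Qed.

Lemma mul_pred_ge0 (x : int) : 0 <= x * (x - 1).
Proof. nia. Qed.

Lemma mulr_ge0_le0_eqN1 (x y : int) : 0 <= x -> y <= 0 -> x * y = -1 -> x = 1 /\ y = -1.
Proof.
move=> x0 y0 xy.
have x1 : 1 <= x by case: (eqVneq x 0) xy => [->|]; [rewrite mul0r|]; lia.
have : x * (y + 1) <= 0 by apply: mulr_ge0_le0; nia.
split; nia.
Qed.

Lemma sumr_le0_eqN1 (I : finType) (F : I -> int) :
  (forall i, F i <= 0) -> \sum_i F i = -1 -> exists i0, forall i, F i = - (i == i0)%:Z.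
Proof.
move=> F_le0 F_sum.
have [i0 Fi0] : exists i0, F i0 != 0.
  apply/existsP; apply: contraTT isT => /existsPn F0.
  by move: F_sum; rewrite big1 // => i _; apply/eqP; rewrite -[_ == _]negbK F0.
exists i0; move: F_sum; rewrite (bigD1 i0) //=.
have : \sum_(i | i != i0) F i <= 0 by apply: sumr_le0.
set rest := \sum_(i | i != i0) F i => rest_le0 F_sum.
have F_i0 : F i0 = -1 by move: (F_le0 i0) Fi0; lia.
move=> i; have [->|ii0] := eqVneq i i0; first by rewrite F_i0.
have rest0 : \sum_(j | j != i0) - F j = 0 by rewrite sumrN -/rest; lia.
have Fi_ge0 j : j != i0 -> 0 <= - F j by rewrite oppr_ge0.
by have := psumr_eq0P Fi_ge0 rest0 ii0; lia.
Qed.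

Section IntersectionForm.
Variables (n : nat) (M : 'M[int]_n) (g : 'I_n -> nat).
Hypothesis M_sym : forall i j, M i j = M j i.
Hypothesis M_off_ge0 : forall i j, i != j -> 0 <= M i j.

Definition csubZ (U : ecycle n) (c : int) (X : ecycle n) : ecycle n :=
  fun i => U i - c * X i.

Definition csum (I : finType) (U : I -> ecycle n) : ecycle n :=
  fun i => \sum_k U k i.

Lemma interC D1 D2 : inter M D1 D2 = inter M D2 D1.
Proof.
rewrite /inter exchange_big; apply: eq_bigr => i _; apply: eq_bigr => j _.
by rewrite M_sym; ring.
Qed.

Lemma inter_Ecycr D e : inter M D (Ecyc e) = \sum_i D i * M i e.
Proof.
apply: eq_bigr => i _; rewrite (bigD1 e) //= big1 /Ecyc ?eqxx ?mulr1 ?addr0 //.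
by move=> j /negPf ->; rewrite mulr0.
Qed.

Lemma inter_Ecyc f e : inter M (Ecyc f) (Ecyc e) = M f e.
Proof.
rewrite inter_Ecycr (bigD1 f) //= big1 /Ecyc ?eqxx ?mul1r ?addr0 //.
by move=> i /negPf ->; rewrite mul0r.
Qed.

Lemma inter_decompr D1 D2 : inter M D1 D2 = \sum_j D2 j * inter M D1 (Ecyc j).
Proof.
under [RHS]eq_bigr do rewrite inter_Ecycr.
rewrite /inter exchange_big; apply: eq_bigr => j _.
by rewrite mulr_sumr; apply: eq_bigr => i _; ring.
Qed.

Lemma inter_csubZl U c X D : inter M (csubZ U c X) D = inter M U D - c * inter M X D.
Proof.
rewrite /inter mulr_sumr -sumrB; apply: eq_bigr => i _.
by rewrite mulr_sumr -sumrB; apply: eq_bigr => j _; rewrite /csubZ; ring.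
Qed.

Lemma inter_csubZr D U c X : inter M D (csubZ U c X) = inter M D U - c * inter M D X.
Proof. by rewrite interC inter_csubZl !(interC D). Qed.

Lemma inter_csuml (I : finType) (U : I -> ecycle n) D :
  inter M (csum U) D = \sum_k inter M (U k) D.
Proof.
symmetry; rewrite exchange_big; apply: eq_bigr => i _.
by rewrite exchange_big; apply: eq_bigr => j _; rewrite /csum !mulr_suml.
Qed.

Lemma inter_scale (c d : int) D1 D2 :
  inter M (fun i => c * D1 i) (fun j => d * D2 j) = c * d * inter M D1 D2.
Proof.
rewrite /inter mulr_sumr; apply: eq_bigr => i _.
by rewrite mulr_sumr; apply: eq_bigr => j _; ring.
Qed.

Lemma sym_sum_offdiag_even (x : 'I_n -> 'I_n -> int) :
  (forall i j, x i j = x j i) -> (2 %| \sum_i \sum_j x i j - \sum_i x i i)%Z.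
Proof.
move=> x_sym.
have trichotomy : \sum_i \sum_j x i j = \sum_(i < n) \sum_(j < n) (i < j)%N%:Z * x i j
    + \sum_(i < n) \sum_(j < n) (j < i)%N%:Z * x i j + \sum_i \sum_j (i == j)%:Z * x i j.
  rewrite -!big_split; apply: eq_bigr => i _; rewrite -!big_split; apply: eq_bigr => j _.
  have : ((i < j)%N + (j < i)%N + (i == j))%N = 1%N by rewrite -val_eqE /=; case: ltngtP.
  by case: (i < j)%N; case: (j < i)%N; case: (i == j) => //= _; ring.
have lower : \sum_(i < n) \sum_(j < n) (j < i)%N%:Z * x i j
    = \sum_(i < n) \sum_(j < n) (i < j)%N%:Z * x i j.
  by rewrite exchange_big; apply: eq_bigr => i _; apply: eq_bigr => j _; rewrite x_sym.
have diag : \sum_i \sum_j (i == j)%:Z * x i j = \sum_i x i i.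
  apply: eq_bigr => i _; rewrite (bigD1 i) //= eqxx mul1r big1 ?addr0 //.
  by move=> j /negPf; rewrite eq_sym => ->; rewrite mul0r.
by rewrite trichotomy lower diag addrK; apply/dvdzP; eexists; rewrite -mulr2n mulr_natr.
Qed.

Lemma inter_addK_even D : (2 %| inter M D D + interK M g D)%Z.
Proof.
have -> : inter M D D + interK M g D = (inter M D D - \sum_i D i * M i i * D i)
    + \sum_i (D i * M i i * D i + D i * KE M g i).
  by rewrite big_split /= /interK; ring.
apply: rpredD; first by apply: sym_sum_offdiag_even => i j; rewrite M_sym; ring.
apply: rpred_sum => i _; rewrite /KE.
have -> : D i * M i i * D i + D i * (2 * (g i)%:Z - 2 - M i i)
    = 2 * (D i * ((g i)%:Z - 1)) + M i i * (D i * (D i - 1)) by ring.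
by apply: rpredD; [apply: dvdz_mulr | apply/dvdz_mull/dvdz2_mul_pred].
Qed.

Section Bessel.
Hypothesis inter_self_le0 : forall D, inter M D D <= 0.
Variables (u : nat -> ecycle n) (m : nat).
Hypothesis u_self : forall j, (j < m)%N -> inter M (u j) (u j) = -1.
Hypothesis u_orth : forall i j, (i < m)%N -> (j < m)%N -> i != j -> inter M (u i) (u j) = 0.

(* Since u_t.u_t = -1, adding (D.u_t) u_t kills the u_t-component. *)
Fixpoint bessel_proj (D : ecycle n) (t : nat) : ecycle n :=
  if t is t'.+1 then csubZ (bessel_proj D t') (- inter M D (u t')) (u t') else D.

Lemma inter_bessel_proj D t l :
  (t <= l < m)%N -> inter M (bessel_proj D t) (u l) = inter M D (u l).
Proof.
elim: t => [//|t IH] tlm /=.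
by rewrite inter_csubZl IH ?u_orth ?mulr0 ?subr0 //; lia.
Qed.

Lemma inter_bessel_proj_self D t : (t <= m)%N ->
  inter M (bessel_proj D t) (bessel_proj D t) = inter M D D + \sum_(j < t) inter M D (u j) ^+ 2.
Proof.
elim: t => [_|t IH tm]; first by rewrite big_ord0 addr0.
rewrite big_ord_recr /= inter_csubZl !inter_csubZr (interC (u t)) IH; last lia.
by rewrite inter_bessel_proj ?u_self //; [ring | lia].
Qed.

Lemma bessel_inequality D : inter M D D + \sum_(j < m) inter M D (u j) ^+ 2 <= 0.
Proof. by rewrite -inter_bessel_proj_self. Qed.

End Bessel.

Definition csubE (D : ecycle n) (f : 'I_n) : ecycle n := csubZ D 1 (Ecyc f).

Lemma csubEE D f e : csubE D f e = D e - (e == f)%:Z.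
Proof. by rewrite /csubE /csubZ /Ecyc mul1r. Qed.

Lemma csubE_other D f e : e != f -> csubE D f e = D e.
Proof. by move=> /negPf ef; rewrite csubEE ef subr0. Qed.

Lemma csubE_le D f e : csubE D f e <= D e.
Proof. by rewrite csubEE lerBlDr lerDl. Qed.

Lemma csubE_ge0 D f e : (forall i, 0 <= D i) -> D f = 1 -> 0 <= csubE D f e.
Proof.
move=> D_ge0 Df; have [->|/csubE_other->] := eqVneq e f; last exact: D_ge0.
by rewrite csubEE Df eqxx subrr.
Qed.

Lemma inter_csubE_Ecyc D f e : inter M (csubE D f) (Ecyc e) = inter M D (Ecyc e) - M f e.
Proof. by rewrite inter_csubZl inter_Ecyc mul1r. Qed.

Lemma inter_csubE_self D f :
  inter M (csubE D f) (csubE D f) = inter M D D - 2 * inter M D (Ecyc f) + M f f.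
Proof. by rewrite inter_csubZl !inter_csubZr inter_Ecyc (interC (Ecyc f)); ring. Qed.

(* The last clause says that D - E_f is orthogonal to every component outside
   the support of D. *)
Definition tip (D : ecycle n) (f : 'I_n) :=
  [/\ D f = 1, forall e, D e != 0 -> inter M D (Ecyc e) = - (e == f)%:Z
    & forall e, D e = 0 -> inter M D (Ecyc e) = M f e].

Lemma tip_inter_self D f : tip D f -> inter M D D = -1.
Proof.
case=> Df D_supp _; rewrite inter_decompr (bigD1 f) //= D_supp Df ?eqxx //.
rewrite big1 ?addr0 // => e ef.
have [->|De] := eqVneq (D e) 0; first by rewrite mul0r.
by rewrite D_supp // (negPf ef) oppr0 mulr0.
Qed.

Lemma tip_inter_Ecyc_ge0 D f e :
  (forall i, 0 <= D i) -> tip D f -> e != f -> 0 <= inter M D (Ecyc e).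
Proof.
move=> D_ge0 [_ D_supp D_out] ef.
have [De|De] := eqVneq (D e) 0; first by rewrite D_out // M_off_ge0 // eq_sym.
by rewrite D_supp // (negPf ef) oppr0.
Qed.

Lemma unique_negative_component D : (forall e, 0 <= D e) ->
  (forall e, D e != 0 -> inter M D (Ecyc e) <= 0) -> inter M D D = -1 ->
  exists2 f, D f = 1 & forall e, D e != 0 -> inter M D (Ecyc e) = - (e == f)%:Z.
Proof.
move=> D_ge0 D_nef DD.
have [f Ff] : exists f, forall e, D e * inter M D (Ecyc e) = - (e == f)%:Z.
  apply: sumr_le0_eqN1; last by rewrite -inter_decompr.
  move=> e; have [->|De] := eqVneq (D e) 0; first by rewrite mul0r.
  exact: mulr_ge0_le0 (D_ge0 e) (D_nef e De).
have Df_neq0 : D f != 0 by apply: contra_eq_neq (Ff f) => ->; rewrite mul0r eqxx.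
have Ff1 : D f * inter M D (Ecyc f) = -1 by rewrite Ff eqxx.
have [Df DEf] := mulr_ge0_le0_eqN1 (D_ge0 f) (D_nef f Df_neq0) Ff1.
exists f => // e De; have [->|ef] := eqVneq e f; first by rewrite DEf.
by move/eqP: (Ff e); rewrite (negPf ef) oppr0 mulf_eq0 (negPf De) => /eqP ->.
Qed.

Lemma inter_Ecyc_ge_pair D e f1 f2 : (forall i, 0 <= D i) -> D e = 0 -> f1 != f2 ->
  D f1 * M f1 e + D f2 * M f2 e <= inter M D (Ecyc e).
Proof.
move=> D_ge0 De f12.
have term_ge0 i : 0 <= D i * M i e.
  have [->|ie] := eqVneq i e; first by rewrite De mul0r.
  exact: mulr_ge0 (D_ge0 i) (M_off_ge0 ie).
rewrite inter_Ecycr (bigD1 f1) //= (bigD1 f2) 1?eq_sym //= addrA lerDl.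
exact: sumr_ge0.
Qed.

Lemma tip_csubE D f : (forall e, 0 <= D e) -> M f f = -2 -> tip D f ->
  exists f', tip (csubE D f) f' /\
    forall e, inter M (csubE D f) (Ecyc e) = (e == f)%:Z - (e == f')%:Z.
Proof.
move=> D_ge0 Mff tipD; have DD := tip_inter_self tipD.
case: tipD => Df D_supp D_out; set C := csubE D f.
have DEf : inter M D (Ecyc f) = -1 by rewrite D_supp ?Df ?eqxx.
have Cf : C f = 0 by rewrite /C csubEE Df eqxx.
have C_other e : e != f -> C e = D e by apply: csubE_other.
have C_ge0 e : 0 <= C e by apply: csubE_ge0.
have C_supp e : C e != 0 -> e != f /\ inter M C (Ecyc e) = - M f e.
  move=> Ce; have ef : e != f by apply: contra_neq Ce => ->.
  by rewrite inter_csubE_Ecyc D_supp -?C_other // (negPf ef) sub0r.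
have CC : inter M C C = -1 by rewrite inter_csubE_self DD DEf Mff.
have [f' Cf' C_supp'] : exists2 f', C f' = 1 &
    forall e, C e != 0 -> inter M C (Ecyc e) = - (e == f')%:Z.
  apply: unique_negative_component => // e /C_supp [ef ->].
  by rewrite oppr_le0 M_off_ge0 // eq_sym.
have Cf'_neq0 : C f' != 0 by rewrite Cf'.
have [f'f Mff'] : f' != f /\ M f f' = 1.
  have [f'f] := C_supp f' Cf'_neq0; rewrite C_supp' // eqxx; split => //; lia.
have CEf : inter M C (Ecyc f) = 1 by rewrite inter_csubE_Ecyc DEf Mff.
have C_out e : C e = 0 -> e != f -> inter M C (Ecyc e) = 0 /\ M f' e = 0.
  move=> Ce ef; have De : D e = 0 by rewrite -C_other.
  have f'e : f' != e by apply: contra_eq_neq Ce => <-; rewrite Cf'.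
  have := inter_Ecyc_ge_pair D_ge0 De (f1 := f) (f2 := f'); rewrite eq_sym => /(_ f'f).
  rewrite D_out // Df -C_other // Cf' !mul1r inter_csubE_Ecyc D_out // subrr.
  by have := M_off_ge0 f'e; lia.
exists f'; split.
  split=> // e Ce; have [->|ef] := eqVneq e f; first by rewrite CEf M_sym Mff'.
  by have [-> ->] := C_out e Ce ef.
move=> e; have [->|ef] := eqVneq e f; first by rewrite CEf eq_sym (negPf f'f) subr0.
have [Ce|Ce] := eqVneq (C e) 0.
  have [-> _] := C_out e Ce ef.
  suff /negPf -> : e != f' by rewrite subrr.
  by apply/eqP => ef'; move: Ce; rewrite ef' Cf'.
by rewrite C_supp' // sub0r.
Qed.

Section YauSequence.
Hypothesis M_negdef : forall D : ecycle n, (exists i, D i != 0) -> inter M D D < 0.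
Variables (Z Zmin : ecycle n) (Ds : nat -> ecycle n) (m : nat) (a : 'I_n).
Hypothesis Z_ge0 : forall i, 0 <= Z i.
Hypothesis Z_full : forall i, Z i != 0.
Hypothesis Z_nef : forall i, inter M Z (Ecyc i) <= 0.
Hypothesis Z_self : inter M Z Z = -1.
Hypothesis pa_Z_gt0 : 0 < pa M g Z.
Hypothesis minus2_off_a : forall i, i != a -> minus2_curve M g i.
Hypothesis Zmin_spec : is_Zmin M g Z Zmin.
Hypothesis Yau_spec : is_yau_sequence M g Z Zmin Ds m.

Local Notation kappa := (KE M g a).

Lemma m_gt0 : (0 < m)%N.
Proof. by case: Yau_spec. Qed.

Lemma inter_self_le0 D : inter M D D <= 0.
Proof.
have [/existsP D_neq0|/existsPn D0] := boolP [exists i, D i != 0].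
  exact/ltW/M_negdef.
rewrite /inter big1 // => i _; move/negPn/eqP: (D0 i) => ->.
by rewrite big1 // => j _; rewrite !mul0r.
Qed.

Lemma interK_concentrated D : interK M g D = D a * kappa.
Proof.
rewrite /interK (bigD1 a) //= big1 ?addr0 // => i /minus2_off_a [gi Mii].
by rewrite /KE gi Mii; lia.
Qed.

Lemma paE D : pa M g D = 1 + ((inter M D D + D a * kappa) %/ 2)%Z.
Proof. by rewrite /pa interK_concentrated. Qed.

Lemma Zmin_a_neq0 : Zmin a != 0.
Proof.
case: Zmin_spec => -[[_ [i Zmin_i]] _ pa_Zmin] _.
apply: contra_eq_neq pa_Zmin => Zmin_a.
have : inter M Zmin Zmin < 0 by apply: M_negdef; exists i; rewrite eq_sym.
by move: pa_Z_gt0; rewrite !paE Zmin_a mul0r addr0; lia.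
Qed.

Definition psum j : ecycle n := csum (fun k : 'I_j => Ds k.+1).

Lemma inter_psumS j D : inter M (psum j.+1) D = inter M (psum j) D + inter M (Ds j.+1) D.
Proof. by rewrite /psum !inter_csuml big_ord_recr. Qed.

Definition yau_inv j f := [/\ tip (Ds j) f, forall e, 0 <= Ds j e, Ds j a = Z a
  & forall e, inter M (psum j) (Ecyc e) = - (e == f)%:Z].

Lemma yau_inv1 : exists f, yau_inv 1 f.
Proof.
case: Yau_spec => _ Ds1 _ _.
have [f Zf Z_supp] := unique_negative_component Z_ge0 (fun e _ => Z_nef e) Z_self.
exists f; split; rewrite ?Ds1 //.
- by split=> // e Ze; move: (Z_full e); rewrite Ze.
- by move=> e; rewrite /psum inter_csuml big_ord1 Ds1 Z_supp.
Qed.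

Lemma yau_tip_neq_a j f : (1 <= j < m)%N -> yau_inv j f -> f != a.
Proof.
case: Yau_spec => _ _ /(_ j) Yau_j _ /Yau_j [Ds_j_Zmin _] [[Df Ds_supp _] _ _ _].
apply/eqP => fa; have := Ds_supp f; rewrite Df fa Ds_j_Zmin ?eqxx; last exact: Zmin_a_neq0.
by move/(_ isT).
Qed.

Lemma pa_csubE D f : f != a -> inter M D (Ecyc f) = -1 -> pa M g (csubE D f) = pa M g D.
Proof.
move=> fa DEf; have [_ Mff] := minus2_off_a fa.
rewrite !paE inter_csubE_self DEf Mff csubE_other 1?eq_sym //.
by congr (1 + (_ %/ 2)%Z); ring.
Qed.

Lemma yau_next j f : (1 <= j < m)%N -> yau_inv j f -> Ds j.+1 = csubE (Ds j) f.
Proof.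
move=> jm inv_j; have fa := yau_tip_neq_a jm inv_j.
case: inv_j => -[Df Ds_supp _] Ds_ge0 Ds_a _.
case: Yau_spec => _ _ /(_ j jm) [_ [[_ [next_le _] next_supp _] next_max]] _.
have DEf : inter M (Ds j) (Ecyc f) = -1 by rewrite Ds_supp ?Df ?eqxx.
set C := csubE (Ds j) f.
have C_other e : e != f -> C e = Ds j e by apply: csubE_other.
have Cf : C f = 0 by rewrite /C csubEE Df eqxx.
have C_ge0 : cle (czero n) C by move=> e; apply: csubE_ge0.
have C_cand : [/\ clt (czero n) C, clt C (Ds j),
    forall i, in_supp C i -> inter M (Ds j) (Ecyc i) = 0 & pa M g C = pa M g (Ds j)].
  split; last exact: pa_csubE.
  - have Ca : C a = Z a by rewrite C_other 1?eq_sym.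
    by split=> //; exists a; rewrite Ca eq_sym.
  - by split; [exact: csubE_le | exists f; rewrite Cf Df].
  - move=> i Ci; have i_f : i != f by apply: contra_neq Ci => ->.
    by rewrite Ds_supp -?C_other // (negPf i_f).
apply: functional_extensionality => e; apply/eqP; rewrite eq_le next_max // andbT.
have [->|ef] := eqVneq e f; last by rewrite C_other //; apply: next_le.
have : Ds j.+1 f == 0.
  by apply: contraT => /next_supp; rewrite DEf.
by move/eqP ->; rewrite Cf.
Qed.

Lemma yau_inv_next j f : (1 <= j < m)%N -> yau_inv j f -> exists f', yau_inv j.+1 f'.
Proof.
move=> jm inv_j; have fa := yau_tip_neq_a jm inv_j.
have next := yau_next jm inv_j.
case: inv_j => tip_j Ds_ge0 Ds_a psum_j.
have [_ Mff] := minus2_off_a fa.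
have [f' [tip' next_E]] := tip_csubE Ds_ge0 Mff tip_j.
exists f'; split; rewrite ?next //.
- by move=> e; apply: csubE_ge0; case: tip_j.
- by rewrite csubE_other 1?eq_sym.
- by move=> e; rewrite inter_psumS next psum_j next_E; ring.
Qed.

Lemma yau_inv_all j : (1 <= j <= m)%N -> exists f, yau_inv j f.
Proof.
elim: j => [//|[|j] IH jm]; first exact: yau_inv1.
have [|f inv_j] := IH; first lia.
by apply: yau_inv_next inv_j; lia.
Qed.

Lemma yau_mono j : (1 <= j < m)%N -> forall e, Ds j.+1 e <= Ds j e.
Proof.
move=> jm e; have [|f inv_j] := @yau_inv_all j; first lia.
by rewrite (yau_next jm inv_j) csubE_le.
Qed.

Lemma yau_chain i l : (1 <= i <= l)%N -> (l <= m)%N -> forall e, Ds l e <= Ds i e.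
Proof.
move=> /andP [i1 il] lm e; elim: l il lm => [|l IH]; first by rewrite leqn0 => /eqP->.
rewrite leq_eqVlt => /orP [/eqP <- //|il] lm.
apply: le_trans (yau_mono _ e) (IH il (ltnW lm)); lia.
Qed.

Lemma yau_orth i l : (1 <= i < l)%N -> (l <= m)%N -> inter M (Ds i) (Ds l) = 0.
Proof.
move=> il lm; have im : (1 <= i < m)%N by lia.
case: Yau_spec => _ _ /(_ i im) [_ [[_ _ next_supp _] _]] _.
rewrite inter_decompr big1 // => e _.
have [->|Dl_e] := eqVneq (Ds l e) 0; first by rewrite mul0r.
rewrite next_supp ?mulr0 //; apply: contra_neq Dl_e => Dnext_e.
have [|f [_ Dl_ge0 _ _]] := @yau_inv_all l; first lia.
have chain : Ds l e <= Ds i.+1 e by apply: yau_chain; lia.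
by move: chain (Dl_ge0 e); rewrite Dnext_e; lia.
Qed.

Lemma yau_last_tip f : yau_inv m f -> f = a.
Proof.
(* Otherwise D_m - E_f is a cycle of genus p_a(Z) below Z, which contains
   Z_min; so E_f is not in Z_min and D_m.Z_min >= 0. *)
case=> tip_m Dm_ge0 Dm_a _; apply/eqP; apply: contraT => fa.
have [_ Mff] := minus2_off_a fa.
have DEf : inter M (Ds m) (Ecyc f) = -1.
  by case: tip_m => Df Dm_supp _; rewrite Dm_supp ?Df ?eqxx.
set C := csubE (Ds m) f.
have Df : Ds m f = 1 by case: tip_m.
have Cf : C f = 0 by rewrite /C csubEE Df eqxx.
have C_cand : [/\ clt (czero n) C, cle C Z & pa M g C = pa M g Z].
  have Ca : C a = Z a by rewrite /C csubE_other 1?eq_sym.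
  split.
  - split; last by exists a; rewrite Ca eq_sym.
    by move=> e; apply: csubE_ge0.
  - move=> e; apply: le_trans (csubE_le _ _ _) _; case: Yau_spec => _ <- _ _.
    by apply: yau_chain; rewrite ?m_gt0.
  - by rewrite !paE Ca inter_csubE_self DEf Mff (tip_inter_self tip_m) Z_self.
have Zmin_f : Zmin f = 0.
  case: Zmin_spec => -[[Zmin_ge0 _] _ _] /(_ C C_cand) Zmin_le.
  apply/eqP; rewrite eq_le; apply/andP; split; last exact: Zmin_ge0.
  by rewrite -Cf; apply: Zmin_le.
case: Yau_spec => _ _ _; rewrite ltNge inter_decompr => /negbTE <-.
apply: sumr_ge0 => e _; have [->|ef] := eqVneq e f; first by rewrite Zmin_f mul0r.
case: Zmin_spec => -[[Zmin_ge0 _] _ _] _.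
exact: mulr_ge0 (Zmin_ge0 e) (tip_inter_Ecyc_ge0 Dm_ge0 tip_m ef).
Qed.

Lemma inter_psum D : inter M (psum m) D = - D a.
Proof.
have [|f inv_m] := @yau_inv_all m; first by rewrite m_gt0 leqnn.
have fa := yau_last_tip inv_m; case: inv_m => _ _ _ psum_E.
rewrite inter_decompr (bigD1 a) //= psum_E fa eqxx big1 ?addr0 => [|e ea]; first by rewrite mulrN1.
by rewrite psum_E fa (negPf ea) oppr0 mulr0.
Qed.

Lemma psum_a : psum m a = m%:Z * Z a.
Proof.
rewrite /psum /csum (eq_bigr (fun _ => Z a)) => [|k _].
  by rewrite sumr_const card_ord -mulr_natl natz.
by have [|f [_ _ ->]] := @yau_inv_all k.+1; first by rewrite /= ltn_ord.
Qed.

Lemma yau_bessel D : inter M D D + \sum_(j < m) inter M D (Ds j.+1) ^+ 2 <= 0.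
Proof.
apply: (bessel_inequality (u := fun j => Ds j.+1) inter_self_le0) => [j jm | i j im jm ij].
  by have [|f [tip_j _ _ _]] := @yau_inv_all j.+1; [lia | exact: tip_inter_self tip_j].
wlog lt_ij : i j im jm ij / (i < j)%N.
  move=> H; case: (ltngtP i j) => [|ji|/eqP]; [exact: H | |by rewrite (negPf ij)].
  by rewrite interC H // eq_sym.
by apply: yau_orth; lia.
Qed.

Lemma Z_a_eq1 : Z a = 1.
Proof.
have := yau_bessel (psum m); rewrite inter_psum psum_a.
under eq_bigr => j _ do rewrite inter_psum.
rewrite (eq_bigr (fun _ => Z a ^+ 2)) => [|j _]; last first.
  by have [|f [_ _ ->]] := @yau_inv_all j.+1; rewrite /= ?ltn_ord ?sqrrN.
rewrite sumr_const card_ord -mulr_natl => bessel.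
have := Z_full a; have := Z_ge0 a; have := m_gt0; nia.
Qed.

Lemma kappaE : kappa = 2 * pa M g Z - 1.
Proof.
have := inter_addK_even Z; rewrite interK_concentrated Z_self Z_a_eq1 mul1r => /divzK.
by rewrite paE Z_self Z_a_eq1 mul1r; lia.
Qed.

Lemma pa_le_yau_bound D : pa M g D <= ((pa M g Z * (pa M g Z - 1) * m%:Z) %/ 2)%Z + 1.
Proof.
set p := pa M g Z; set c := fun j : 'I_m => inter M D (Ds j.+1).
have Da : D a = - \sum_j c j.
  rewrite -[D a]opprK -inter_psum /psum inter_csuml.
  by congr (- _); apply: eq_bigr => j _; apply: interC.
have term_le j : - c j ^+ 2 - c j * kappa <= p * (p - 1).
  by have := mul_pred_ge0 (c j + p); rewrite kappaE -/p; nia.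
have numer_le : inter M D D + D a * kappa <= p * (p - 1) * m%:Z.
  have : \sum_j (- c j ^+ 2 - c j * kappa) <= \sum_(j < m) p * (p - 1).
    by apply: ler_sum => j _; apply: term_le.
  rewrite sumrB sumrN -mulr_suml sumr_const card_ord -mulr_natr natz.
  have bessel : inter M D D + \sum_j c j ^+ 2 <= 0 := yau_bessel D.
  by rewrite Da; lra.
by rewrite paE addrC lerD2r lez_pdiv2r.
Qed.

Lemma psum_ge0 e : 0 <= psum m e.
Proof.
apply: sumr_ge0 => k _.
by have [|f [_ Dk_ge0 _ _]] := @yau_inv_all k.+1; rewrite /= ?ltn_ord.
Qed.

Lemma arith_genus_yau :
  is_arith_genus M g (((pa M g Z * (pa M g Z - 1) * m%:Z) %/ 2)%Z + 1).
Proof.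
split; last by move=> D _; apply: pa_le_yau_bound.
set p := pa M g Z; exists (fun e => p * psum m e); split.
  split; first by move=> e; apply: mulr_ge0; [lia | apply: psum_ge0].
  exists a; rewrite psum_a Z_a_eq1 mulr1 eq_sym mulf_neq0 //; [lia | ].
  by have := m_gt0; lia.
have PP : inter M (fun e => p * psum m e) (fun e => p * psum m e) = - (p ^+ 2 * m%:Z).
  by rewrite inter_scale inter_psum psum_a Z_a_eq1; ring.
by rewrite paE PP psum_a Z_a_eq1 kappaE -/p addrC; congr (divz _ 2 + 1); ring.
Qed.

End YauSequence.

End IntersectionForm.

Theorem theorem3p11 (n : nat) (M : 'M[int]_n) (g : 'I_n -> nat)
    (Z Zmin : ecycle n) (Ds : nat -> ecycle n) (m : nat) :
  resolution_data M g ->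
  is_fundamental_cycle M Z ->
  inter M Z Z = -1 ->
  0 < pa M g Z ->
  essentially_irreducible M g Z ->
  is_Zmin M g Z Zmin ->
  is_yau_sequence M g Z Zmin Ds m ->
  is_arith_genus M g
    (((pa M g Z * (pa M g Z - 1) * m%:Z) %/ 2)%Z + 1).
Proof.
move=> [_ [M_sym M_off_ge0 M_negdef _ _]] [[[Z_ge0 _] [Z_full Z_nef]] _] Z_self pa_Z_gt0.
move=> [a [_ _ minus2_supp]] Zmin_spec Yau_spec.
have minus2_off_a i : i != a -> minus2_curve M g i.
  by move=> ia; apply: minus2_supp ia (Z_full i).
exact: (arith_genus_yau M_sym M_off_ge0 M_negdef Z_ge0 Z_full Z_nef Z_self pa_Z_gt0
  minus2_off_a Zmin_spec Yau_spec).
Qed.
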